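(* There is an absolute constant $A>0$ such that for every $r\ge1$ there exists a function $h:\mathbb{R}\to\mathbb{R}$ with $h(x)=x$ for all $x\in[-r,r]$, such that $$\int_{\mathbb{R}}|\hat h(\omega)|\,d\omega\le A r^{3/2}\quad\text{and}\quad\int_{\mathbb{R}}|\omega|\,|\hat h(\omega)|\,d\omega\le A r^{1/2}.$$
   Context: Fourier transform: $\hat h(\omega)=\frac{1}{2\pi}\int_{\mathbb{R}}h(x)e^{-i\omega x}dx$. *)

From Stdlib Require Import Reals Lra.
Open Scope R_scope.

Definition improper_int (f : R -> R) (l : R) : Prop :=
  (forall a b : R, inhabited (Riemann_integrable f a b)) /\
  forall eps : R, 0 < eps -> exists M : R, forall a b : R,
    a <= - M -> M <= b ->
    forall pr : Riemann_integrable f a b, Rabs (RiemannInt pr - l) < eps.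

Definition abs_integrable (h : R -> R) : Prop :=
  (forall a b : R, inhabited (Riemann_integrable h a b)) /\
  exists l : R, improper_int (fun x => Rabs (h x)) l.

(* Fourier transform  hat h(w) = (1/(2 pi)) int_R h(x) e^{-i w x} dx,
   given by its real part [hr] and imaginary part [hi]:
   hr w = (1/2pi) int h(x) cos(w x) dx,  hi w = -(1/2pi) int h(x) sin(w x) dx. *)
Definition is_fourier (h hr hi : R -> R) : Prop :=
  forall w : R,
    improper_int (fun x => h x * cos (w * x) / (2 * PI)) (hr w) /\
    improper_int (fun x => - (h x * sin (w * x)) / (2 * PI)) (hi w).

Definition cmod (re im : R) : R := sqrt (re ^ 2 + im ^ 2).

(* Take h equal to x on [-r, r], continued on [r, 2r] by r q((x - r)/r) for a quintic q
   that glues to 0 in a C^2 way, extended oddly to [-2r, -r] and by 0 beyond.  The k-th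
   derivative of h is bounded by O(r^(1-k)) on a support of length O(r), and three
   integrations by parts (no boundary terms, since h, h', h'' are continuous and vanish at
   +-2r) give |w|^k |hat h(w)| = O(r^(2-k)) for k <= 3.  Hence |hat h(w)| (1 + r^2 w^2) = O(r^2)
   and |w| |hat h(w)| (1 + r^2 w^2) = O(r), and integrating against 1/(1 + r^2 w^2), of total
   mass pi/r, bounds the two integrals by O(r) <= O(r^(3/2)) and O(1) <= O(r^(1/2)). *)

From Stdlib Require Import Reals Lra Lia Classical.
From Coquelicot Require Import Coquelicot.
Open Scope R_scope.

Lemma continuous_of_lipschitz (f : R -> R) (K x0 : R) :
  (forall x, Rabs (f x - f x0) <= K * Rabs (x - x0)) -> continuous f x0.
Proof.
  intros Hf. apply continuity_pt_filterlim.
  unfold continuity_pt, continue_in, limit1_in, limit_in; simpl; unfold R_dist.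
  intros eps Heps.
  assert (HK : 0 < Rabs K + 1) by (generalize (Rabs_pos K); lra).
  exists (eps / (Rabs K + 1)); split; [apply Rdiv_lt_0_compat; lra|].
  intros x [_ Hx].
  assert (Hdelta : Rabs K * (eps / (Rabs K + 1)) < eps).
  { replace (Rabs K * (eps / (Rabs K + 1))) with (eps - eps / (Rabs K + 1)) by (field; lra).
    generalize (Rdiv_lt_0_compat eps _ Heps HK); lra. }
  apply Rle_lt_trans with (Rabs K * Rabs (x - x0)).
  - eapply Rle_trans; [apply Hf|].
    apply Rmult_le_compat_r; [apply Rabs_pos | apply Rle_abs].
  - eapply Rle_lt_trans; [|exact Hdelta].
    apply Rmult_le_compat_l; [apply Rabs_pos | lra].
Qed.

Lemma continuous_of_ex_derive (f : R -> R) (x : R) : ex_derive f x -> continuous f x.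
Proof. apply (@ex_derive_continuous R_AbsRing R_NormedModule). Qed.

Lemma ex_RInt_of_continuous (f : R -> R) (a b : R) :
  (forall x, continuous f x) -> ex_RInt f a b.
Proof. intros Hf; apply (@ex_RInt_continuous R_CompleteNormedModule); auto. Qed.

Lemma continuous_Rplus (f g : R -> R) (x : R) :
  continuous f x -> continuous g x -> continuous (fun y => f y + g y) x.
Proof. apply (continuous_plus f g). Qed.

Definition unit_kernel (tr : R -> R) : Prop :=
  (forall u, Rabs (tr u) <= 1) /\ (forall u v, Rabs (tr u - tr v) <= Rabs (u - v)).

Lemma unit_kernel_of_derive (tr tr' : R -> R) :
  (forall u, derivable_pt_lim tr u (tr' u)) ->
  (forall u, Rabs (tr u) <= 1) -> (forall u, Rabs (tr' u) <= 1) ->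
  unit_kernel tr.
Proof.
  intros Hd Hb Hb'. split; [exact Hb|]. intros u v.
  destruct (MVT_abs tr tr' v u) as [c [-> _]]; [intros; apply Hd|].
  rewrite <- (Rmult_1_l (Rabs (u - v))) at 2.
  apply Rmult_le_compat_r; [apply Rabs_pos | apply Hb'].
Qed.

Lemma unit_kernel_cos : unit_kernel cos.
Proof.
  apply (unit_kernel_of_derive cos (fun u => - sin u)).
  - apply derivable_pt_lim_cos.
  - intros u; destruct (COS_bound u); apply Rabs_le; lra.
  - intros u; destruct (SIN_bound u); apply Rabs_le; lra.
Qed.

Lemma unit_kernel_sin : unit_kernel sin.
Proof.
  apply (unit_kernel_of_derive sin cos).
  - apply derivable_pt_lim_sin.
  - intros u; destruct (SIN_bound u); apply Rabs_le; lra.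
  - intros u; destruct (COS_bound u); apply Rabs_le; lra.
Qed.

Lemma continuous_mul_kernel (p tr : R -> R) (w x : R) :
  unit_kernel tr -> continuous p x -> continuous (fun y => p y * tr (w * y)) x.
Proof.
  intros [_ Hlip] Hp. apply (continuous_mult p (fun y => tr (w * y))); [exact Hp|].
  apply (continuous_comp (fun y => w * y) tr).
  - apply continuous_of_ex_derive; auto_derive; auto.
  - apply (continuous_of_lipschitz tr 1); intros u; rewrite Rmult_1_l; apply Hlip.
Qed.

Lemma RInt_by_parts (f f' g g' : R -> R) (a b : R) :
  (forall x, is_derive f x (f' x)) -> (forall x, is_derive g x (g' x)) ->
  (forall x, continuous f' x) -> (forall x, continuous g' x) ->
  RInt (fun x => f x * g' x) a b
  = f b * g b - f a * g a - RInt (fun x => f' x * g x) a b.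
Proof.
  intros Hf Hg Hf' Hg'.
  assert (Hcf : forall x, continuous f x)
    by (intros x; apply continuous_of_ex_derive; eexists; apply Hf).
  assert (Hcg : forall x, continuous g x)
    by (intros x; apply continuous_of_ex_derive; eexists; apply Hg).
  assert (Hex1 : ex_RInt (fun x => f' x * g x) a b)
    by (apply ex_RInt_of_continuous; intros; apply (continuous_mult f' g); auto).
  assert (Hex2 : ex_RInt (fun x => f x * g' x) a b)
    by (apply ex_RInt_of_continuous; intros; apply (continuous_mult f g'); auto).
  assert (Hprod : is_RInt (fun x => f' x * g x + f x * g' x) a b (f b * g b - f a * g a)).
  { apply (is_RInt_derive (fun x => f x * g x)).
    - intros x _. apply (is_derive_mult f g); auto. intros; apply Rmult_comm.
    - intros x _. apply (continuous_plus (fun x => f' x * g x) (fun x => f x * g' x));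
        [apply (continuous_mult f' g) | apply (continuous_mult f g')]; auto. }
  apply (@is_RInt_unique R_CompleteNormedModule) in Hprod.
  rewrite (RInt_plus (fun x => f' x * g x) (fun x => f x * g' x)) in Hprod; auto.
  simpl in Hprod; unfold plus in Hprod; simpl in Hprod. lra.
Qed.

Lemma RInt_ext_R (f g : R -> R) (a b : R) :
  (forall x, f x = g x) -> RInt f a b = RInt g a b.
Proof. intros Hfg; apply RInt_ext; intros; apply Hfg. Qed.

Lemma RInt_mult_r (f : R -> R) (a b k : R) :
  ex_RInt f a b -> RInt (fun x => f x * k) a b = RInt f a b * k.
Proof.
  intros Hf. rewrite Rmult_comm.
  change (RInt f a b) with (RInt (V := R_CompleteNormedModule) f a b).
  change (k * _) with (scal k (RInt (V := R_CompleteNormedModule) f a b)).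
  rewrite <- (RInt_scal f a b k Hf).
  apply RInt_ext_R; intros; apply Rmult_comm.
Qed.

Lemma RInt_mul_cos_by_parts (p p' : R -> R) (w a b : R) :
  (forall x, is_derive p x (p' x)) -> (forall x, continuous p' x) ->
  w * RInt (fun x => p x * cos (w * x)) a b
  = p b * sin (w * b) - p a * sin (w * a) - RInt (fun x => p' x * sin (w * x)) a b.
Proof.
  intros Hp Hp'.
  assert (Hcp : forall x, continuous p x)
    by (intros x; apply continuous_of_ex_derive; eexists; apply Hp).
  rewrite Rmult_comm, <- RInt_mult_r
    by (apply ex_RInt_of_continuous; intros; apply continuous_mul_kernel; auto using unit_kernel_cos).
  rewrite (RInt_ext_R (fun x => p x * cos (w * x) * w) (fun x => p x * (w * cos (w * x)))) by (intros; ring).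
  apply (RInt_by_parts p p' (fun x => sin (w * x)) (fun x => w * cos (w * x))); auto.
  - intros x; auto_derive; auto; ring.
  - intros x; apply continuous_of_ex_derive; auto_derive; auto.
Qed.

Lemma RInt_mul_sin_by_parts (p p' : R -> R) (w a b : R) :
  (forall x, is_derive p x (p' x)) -> (forall x, continuous p' x) ->
  w * RInt (fun x => p x * sin (w * x)) a b
  = RInt (fun x => p' x * cos (w * x)) a b - (p b * cos (w * b) - p a * cos (w * a)).
Proof.
  intros Hp Hp'.
  assert (Hcp : forall x, continuous p x)
    by (intros x; apply continuous_of_ex_derive; eexists; apply Hp).
  rewrite Rmult_comm, <- RInt_mult_r
    by (apply ex_RInt_of_continuous; intros; apply continuous_mul_kernel; auto using unit_kernel_sin).
  rewrite (RInt_ext_R (fun x => p x * sin (w * x) * w) (fun x => p x * (w * sin (w * x)))) by (intros; ring).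
  rewrite (RInt_by_parts p p' (fun x => - cos (w * x)) (fun x => w * sin (w * x))); auto.
  - rewrite (RInt_ext_R (fun x => p' x * - cos (w * x)) (fun x => p' x * cos (w * x) * -1)) by (intros; ring).
    rewrite RInt_mult_r
      by (apply ex_RInt_of_continuous; intros; apply continuous_mul_kernel; auto using unit_kernel_cos).
    ring.
  - intros x; auto_derive; auto; ring.
  - intros x; apply continuous_of_ex_derive; auto_derive; auto.
Qed.

Lemma abs_RInt_mul_kernel_le (p tr : R -> R) (w a b M : R) :
  a <= b -> unit_kernel tr -> (forall x, continuous p x) ->
  (forall x, a <= x <= b -> Rabs (p x) <= M) ->
  Rabs (RInt (fun x => p x * tr (w * x)) a b) <= (b - a) * M.
Proof.
  intros Hab Htr Hp HM. apply abs_RInt_le_const; auto.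
  - apply ex_RInt_of_continuous; intros; apply continuous_mul_kernel; auto.
  - intros x Hx. rewrite Rabs_mult, <- (Rmult_1_r M).
    apply Rmult_le_compat; auto using Rabs_pos. apply Htr.
Qed.

(* Lipschitz in [w], with constant [(b - a) max |x p(x)|], because [tr] is 1-Lipschitz. *)
Lemma continuous_RInt_mul_kernel (p tr : R -> R) (a b w0 : R) :
  a <= b -> unit_kernel tr -> (forall x, continuous p x) ->
  continuous (fun w => RInt (fun x => p x * tr (w * x)) a b) w0.
Proof.
  intros Hab Htr Hp.
  destruct (continuity_ab_maj (fun x => Rabs (p x * x)) a b Hab) as [xM [HxM _]].
  { intros x _. apply continuity_pt_filterlim. apply (continuous_Rabs_comp (fun x => p x * x)).
    apply (continuous_mult p (fun x => x)); [apply Hp | apply continuous_id]. }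
  apply (continuous_of_lipschitz _ ((b - a) * Rabs (p xM * xM))). intros w.
  assert (Hex : forall v, ex_RInt (fun x => p x * tr (v * x)) a b)
    by (intros v; apply ex_RInt_of_continuous; intros; apply continuous_mul_kernel; auto).
  rewrite <- (RInt_minus (fun x => p x * tr (w * x)) (fun x => p x * tr (w0 * x))) by auto.
  rewrite Rmult_assoc. apply abs_RInt_le_const; auto.
  { apply (@ex_RInt_minus R_CompleteNormedModule); auto. }
  intros x Hx. simpl; unfold minus, plus, opp; simpl.
  replace (p x * tr (w * x) + - (p x * tr (w0 * x)))
    with (p x * (tr (w * x) - tr (w0 * x))) by ring.
  rewrite Rabs_mult.
  apply Rle_trans with (Rabs (p x) * (Rabs x * Rabs (w - w0))).
  - apply Rmult_le_compat_l; [apply Rabs_pos|].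
    rewrite <- Rabs_mult. replace (x * (w - w0)) with (w * x - w0 * x) by ring. apply Htr.
  - rewrite <- Rmult_assoc, <- Rabs_mult.
    apply Rmult_le_compat_r; [apply Rabs_pos | apply HxM; exact Hx].
Qed.

Lemma is_RInt_piece (f g : R -> R) (a b : R) :
  a <= b -> (forall x, a < x < b -> f x = g x) -> (forall x, continuous g x) ->
  is_RInt f a b (RInt g a b).
Proof.
  intros Hab Hfg Hg. apply (is_RInt_ext g f).
  - rewrite Rmin_left, Rmax_right by lra. intros; symmetry; auto.
  - apply (@RInt_correct R_CompleteNormedModule), ex_RInt_of_continuous; auto.
Qed.

Lemma is_RInt_zero_piece (f : R -> R) (a b : R) :
  a <= b -> (forall x, a < x < b -> f x = 0) -> is_RInt f a b 0.
Proof.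
  intros Hab Hf. replace 0 with (RInt (fun _ => 0) a b).
  - apply is_RInt_piece; auto using continuous_const.
  - rewrite RInt_const. apply Rmult_0_r.
Qed.

Lemma improper_int_ext (f g : R -> R) (l : R) :
  (forall x, f x = g x) -> improper_int f l -> improper_int g l.
Proof.
  intros Hfg [Hint Hlim]. split.
  - intros a b. destruct (Hint a b) as [pr]. constructor.
    exact (Riemann_integrable_ext f g a b (fun x _ => Hfg x) pr).
  - intros eps Heps. destruct (Hlim eps Heps) as [M HM]. exists M. intros a b Ha Hb pr.
    destruct (Hint a b) as [prf].
    rewrite <- RInt_Reals, <- (RInt_ext_R f g a b Hfg), (RInt_Reals f a b prf). auto.
Qed.

Lemma is_RInt_three_pieces (f gL gM gR : R -> R) (a b c d a' b' : R) :
  a' <= a -> a <= b -> b <= c -> c <= d -> d <= b' ->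
  (forall x, x < a \/ d < x -> f x = 0) ->
  (forall x, a < x < b -> f x = gL x) -> (forall x, b < x < c -> f x = gM x) ->
  (forall x, c < x < d -> f x = gR x) ->
  (forall x, continuous gL x) -> (forall x, continuous gM x) -> (forall x, continuous gR x) ->
  is_RInt f a' b' (RInt gL a b + RInt gM b c + RInt gR c d).
Proof.
  intros Ha' Hab Hbc Hcd Hb' Hout HL HM HR HgL HgM HgR.
  assert (H0 := is_RInt_zero_piece f a' a Ha' (fun x Hx => Hout x (or_introl (proj2 Hx)))).
  assert (H4 := is_RInt_zero_piece f d b' Hb' (fun x Hx => Hout x (or_intror (proj1 Hx)))).
  assert (H1 := is_RInt_piece f gL a b Hab HL HgL).
  assert (H2 := is_RInt_piece f gM b c Hbc HM HgM).
  assert (H3 := is_RInt_piece f gR c d Hcd HR HgR).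
  assert (H := is_RInt_Chasles f a' d b' _ _ (is_RInt_Chasles f a' c d _ _
    (is_RInt_Chasles f a' b c _ _ (is_RInt_Chasles f a' a b _ _ H0 H1) H2) H3) H4).
  replace (RInt gL a b + RInt gM b c + RInt gR c d)
    with (plus (plus (plus (plus 0 (RInt gL a b)) (RInt gM b c)) (RInt gR c d)) 0);
    [exact H | simpl; unfold plus; simpl; ring].
Qed.

Lemma improper_int_of_wide (f : R -> R) (a d l : R) :
  (forall a' b', a' <= a -> d <= b' -> is_RInt f a' b' l) -> improper_int f l.
Proof.
  intros Hwide. split.
  - intros a0 b0. constructor. apply ex_RInt_Reals_0.
    set (m := Rmin (Rmin a0 b0) a). set (M := Rmax (Rmax a0 b0) d).
    generalize (Rmin_l (Rmin a0 b0) a) (Rmin_r (Rmin a0 b0) a) (Rmax_l (Rmax a0 b0) d)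
      (Rmax_r (Rmax a0 b0) d) (Rmin_l a0 b0) (Rmin_r a0 b0) (Rmax_l a0 b0) (Rmax_r a0 b0).
    fold m M; intros.
    apply (ex_RInt_inside f a0 b0 ((m + M) / 2) ((M - m) / 2)).
    + replace ((m + M) / 2 - (M - m) / 2) with m by field.
      replace ((m + M) / 2 + (M - m) / 2) with M by field.
      eexists; apply Hwide; lra.
    + apply Rabs_le; lra.
    + apply Rabs_le; lra.
  - intros eps Heps. exists (Rmax (- a) d). intros a0 b0 Ha0 Hb0 pr.
    generalize (Rmax_l (- a) d) (Rmax_r (- a) d); intros.
    rewrite <- RInt_Reals, (is_RInt_unique f a0 b0 l (Hwide a0 b0 ltac:(lra) ltac:(lra))).
    rewrite Rminus_diag, Rabs_R0; exact Heps.
Qed.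

Lemma improper_int_of_bounded_partial (g : R -> R) (B : R) :
  (forall x, continuous g x) -> (forall x, 0 <= g x) ->
  (forall n, 0 <= n -> RInt g (- n) n <= B) ->
  exists I, improper_int g I /\ I <= B.
Proof.
  intros Hg Hpos HB.
  assert (Hex : forall a b, ex_RInt g a b) by (intros; apply ex_RInt_of_continuous; auto).
  assert (Hmono : forall a b c d, a <= b -> b <= c -> c <= d -> RInt g b c <= RInt g a d).
  { intros a b c d Hab Hbc Hcd.
    rewrite <- (RInt_Chasles g a c d), <- (RInt_Chasles g a b c) by auto.
    assert (0 <= RInt g a b) by (apply RInt_ge_0; auto).
    assert (0 <= RInt g c d) by (apply RInt_ge_0; auto).
    simpl; unfold plus; simpl; lra. }
  set (E := fun y => exists n, 0 <= n /\ y = RInt g (- n) n).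
  destruct (completeness E) as [I [Hub Hlub]].
  { exists B; intros y [n [Hn ->]]; auto. }
  { exists (RInt g (- 0) 0), 0; split; [lra | auto]. }
  exists I. split; [split|].
  - intros a b; constructor; apply ex_RInt_Reals_0; auto.
  - intros eps Heps.
    assert (Hnear : exists y, E y /\ I - eps < y).
    { apply NNPP; intros Hnone.
      assert (I <= I - eps); [|lra].
      apply Hlub; intros y Ey. apply Rnot_lt_le; intros Hy. apply Hnone; exists y; auto. }
    destruct Hnear as [y [[n0 [Hn0 ->]] Hy]].
    exists n0. intros a b Ha Hb pr. rewrite <- RInt_Reals.
    set (N := Rmax (- a) b). generalize (Rmax_l (- a) b) (Rmax_r (- a) b); fold N; intros.
    assert (RInt g (- n0) n0 <= RInt g a b) by (apply Hmono; lra).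
    assert (RInt g a b <= RInt g (- N) N) by (apply Hmono; lra).
    assert (RInt g (- N) N <= I) by (apply Hub; exists N; split; [lra | auto]).
    apply Rabs_def1; lra.
  - apply Hlub; intros y [n [Hn ->]]; auto.
Qed.

Lemma RInt_lorentzian_le (r n : R) :
  0 < r -> 0 <= n -> RInt (fun w => / (1 + (r * w) ^ 2)) (- n) n <= PI / r.
Proof.
  intros Hr Hn.
  assert (Hden : forall w, 0 < 1 + (r * w) ^ 2) by (intros w; generalize (pow2_ge_0 (r * w)); lra).
  assert (Hatan : is_RInt (fun w => / (1 + (r * w) ^ 2)) (- n) n
                    (atan (r * n) / r - atan (r * - n) / r)).
  { apply (is_RInt_derive (fun w => atan (r * w) / r)).
    - intros x _. auto_derive; auto.
      assert (0 < 1 + r * x * (r * x * 1)) by nra. field; repeat split; lra.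
    - intros x _. apply continuous_of_ex_derive. auto_derive. generalize (Hden x); simpl; lra. }
  rewrite (is_RInt_unique _ _ _ _ Hatan).
  replace (r * - n) with (- (r * n)) by ring. rewrite atan_opp.
  destruct (atan_bound (r * n)).
  replace (atan (r * n) / r - - atan (r * n) / r) with (2 * atan (r * n) * / r) by (field; lra).
  apply Rmult_le_compat_r; [left; apply Rinv_0_lt_compat|]; lra.
Qed.

Lemma improper_int_of_lorentzian_bound (g : R -> R) (r K : R) :
  0 < r -> (forall w, continuous g w) -> (forall w, 0 <= g w) ->
  (forall w, g w * (1 + (r * w) ^ 2) <= K) ->
  exists I, improper_int g I /\ I <= K * (PI / r).
Proof.
  intros Hr Hg Hpos HK.
  assert (Hden : forall w, 0 < 1 + (r * w) ^ 2) by (intros w; generalize (pow2_ge_0 (r * w)); lra).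
  assert (Hlor : forall w, continuous (fun w => / (1 + (r * w) ^ 2)) w).
  { intros w; apply continuous_of_ex_derive; auto_derive. generalize (Hden w); simpl; lra. }
  assert (HK0 : 0 <= K) by (generalize (HK 0) (Hpos 0) (Hden 0); nra).
  apply improper_int_of_bounded_partial; auto. intros n Hn.
  apply Rle_trans with (RInt (fun w => / (1 + (r * w) ^ 2) * K) (- n) n).
  - apply RInt_le; [lra | apply ex_RInt_of_continuous; auto | |].
    + apply ex_RInt_of_continuous; intros w.
      apply (continuous_mult (fun w => / (1 + (r * w) ^ 2)) (fun _ => K)); auto using continuous_const.
    + intros w _. apply Rmult_le_reg_r with (1 + (r * w) ^ 2); [apply Hden|].
      replace (/ (1 + (r * w) ^ 2) * K * (1 + (r * w) ^ 2)) with K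
        by (field; generalize (Hden w); lra).
      apply HK.
  - rewrite RInt_mult_r by (apply ex_RInt_of_continuous; auto).
    rewrite Rmult_comm. apply Rmult_le_compat_l; auto using RInt_lorentzian_le.
Qed.

Lemma cmod_le_abs_sum (x y : R) : cmod x y <= Rabs x + Rabs y.
Proof.
  unfold cmod. rewrite <- (sqrt_pow2 (Rabs x + Rabs y)) by (generalize (Rabs_pos x) (Rabs_pos y); lra).
  apply sqrt_le_1_alt. rewrite <- (pow2_abs x), <- (pow2_abs y).
  generalize (Rabs_pos x) (Rabs_pos y); nra.
Qed.

Lemma continuous_cmod (f g : R -> R) (w : R) :
  continuous f w -> continuous g w -> continuous (fun v => cmod (f v) (g v)) w.
Proof.
  intros Hf Hg. unfold cmod. apply continuous_sqrt_comp.
  assert (Hsq : forall h : R -> R, continuous h w -> continuous (fun v => h v ^ 2) w).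
  { intros h Hh. apply (continuous_comp h (fun t => t ^ 2)); [exact Hh|].
    apply continuous_of_ex_derive; auto_derive; auto. }
  apply (continuous_plus (fun v => f v ^ 2) (fun v => g v ^ 2)); auto.
Qed.

Lemma lorentz_weighted_bounds (C r a g : R) :
  0 < r -> 0 <= g ->
  g <= C * (r * r) -> a ^ 2 * g <= C -> a ^ 3 * g <= C / r ->
  g * (1 + (r * a) ^ 2) <= 2 * C * (r * r) /\ a * g * (1 + (r * a) ^ 2) <= 2 * C * r.
Proof.
  intros Hr Hg H0 H2 H3.
  assert (Hrr : 0 < r * r) by nra.
  assert (Hweight : g * (1 + (r * a) ^ 2) <= 2 * C * (r * r)).
  { replace (g * (1 + (r * a) ^ 2)) with (g + r * r * (a ^ 2 * g)) by ring.
    generalize (Rmult_le_compat_l _ _ _ (Rlt_le _ _ Hrr) H2); lra. }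
  split; [exact Hweight|].
  (* AM-GM: [2 r a g <= g (1 + (r a)^2)], hence [a g <= C r]. *)
  assert (Hamgm : 0 <= g * (r * a - 1) ^ 2) by (apply Rmult_le_pos; [lra | apply pow2_ge_0]).
  assert (Hag : a * g <= C * r).
  { apply Rmult_le_reg_l with (2 * r); [lra|].
    replace (2 * r * (C * r)) with (2 * C * (r * r)) by ring.
    replace (g * (r * a - 1) ^ 2) with (g * (1 + (r * a) ^ 2) - 2 * r * (a * g)) in Hamgm by ring.
    lra. }
  replace (a * g * (1 + (r * a) ^ 2)) with (a * g + r * r * (a ^ 3 * g)) by ring.
  apply Rmult_le_compat_l with (r := r * r) in H3; [|lra].
  replace (r * r * (C / r)) with (C * r) in H3 by (field; lra).
  lra.
Qed.

(* [profile_deriv k] is the [k]-th derivative of the quintic [q] determined by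
   [q(0) = q'(0) = 1], [q''(0) = 0] and [q(1) = q'(1) = q''(1) = 0]. *)
Definition profile_deriv (k : nat) (t : R) : R :=
  match k with
  | 0 => 1 + t - 16 * t ^ 3 + 23 * t ^ 4 - 9 * t ^ 5
  | 1 => 1 - 48 * t ^ 2 + 92 * t ^ 3 - 45 * t ^ 4
  | 2 => - 96 * t + 276 * t ^ 2 - 180 * t ^ 3
  | _ => - 96 + 552 * t - 540 * t ^ 2
  end.

Lemma profile_deriv_is_derive (k : nat) (t : R) :
  (k < 3)%nat -> is_derive (profile_deriv k) t (profile_deriv (S k) t).
Proof.
  intros Hk. destruct k as [|[|[|k]]]; [..|lia]; unfold profile_deriv; auto_derive; auto; ring.
Qed.

Lemma profile_deriv_continuous (k : nat) (t : R) : continuous (profile_deriv k) t.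
Proof.
  apply continuous_of_ex_derive.
  destruct k as [|[|[|k]]]; unfold profile_deriv; auto_derive; auto.
Qed.

Lemma profile_deriv_bound (k : nat) (t : R) :
  0 <= t <= 1 -> Rabs (profile_deriv k t) <= 1188.
Proof.
  intros Ht.
  assert (Hpow : forall n, 0 <= t ^ n <= 1).
  { induction n as [|n IH]; simpl; [lra | nra]. }
  generalize (Hpow 2%nat) (Hpow 3%nat) (Hpow 4%nat) (Hpow 5%nat); intros.
  apply Rabs_le. destruct k as [|[|[|k]]]; unfold profile_deriv; lra.
Qed.

(* [left_piece r k], [mid_piece k] and [right_piece r k] are the [k]-th derivatives of
   [bump r] on [-2r, -r], [-r, r] and [r, 2r]. *)
Definition right_piece (r : R) (k : nat) (x : R) : R :=
  r / r ^ k * profile_deriv k ((x - r) / r).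

Definition left_piece (r : R) (k : nat) (x : R) : R := (-1) ^ S k * right_piece r k (- x).

Definition mid_piece (k : nat) (x : R) : R :=
  match k with 0 => x | 1 => 1 | _ => 0 end.

Definition bump (r x : R) : R :=
  if Rlt_dec x (- (2 * r)) then 0
  else if Rlt_dec x (- r) then left_piece r 0 x
  else if Rle_dec x r then x
  else if Rlt_dec x (2 * r) then right_piece r 0 x
  else 0.

Definition trig_int (r : R) (k : nat) (tr : R -> R) (w : R) : R :=
  RInt (fun x => left_piece r k x * tr (w * x)) (- (2 * r)) (- r)
  + RInt (fun x => mid_piece k x * tr (w * x)) (- r) r
  + RInt (fun x => right_piece r k x * tr (w * x)) r (2 * r).

Definition trig_norm (r : R) (k : nat) (w : R) : R :=
  Rabs (trig_int r k cos w) + Rabs (trig_int r k sin w).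

Definition bump_re (r w : R) : R := trig_int r 0 cos w / (2 * PI).

Definition bump_im (r w : R) : R := - trig_int r 0 sin w / (2 * PI).

Section Bump.

Variable r : R.
Hypothesis r_pos : 0 < r.

Lemma right_piece_is_derive (k : nat) (x : R) :
  (k < 3)%nat -> is_derive (right_piece r k) x (right_piece r (S k) x).
Proof.
  intros Hk.
  assert (Hlin : is_derive (fun x => (x - r) / r) x (/ r)) by (auto_derive; [auto | field; lra]).
  assert (H := is_derive_comp (profile_deriv k) _ x _ _ (profile_deriv_is_derive k _ Hk) Hlin).
  replace (right_piece r (S k) x)
    with (r / r ^ k * scal (/ r) (profile_deriv (S k) ((x - r) / r))).
  - apply (is_derive_scal (fun x => profile_deriv k ((x - r) / r))); exact H.
  - unfold right_piece, scal; simpl; unfold mult; simpl.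
    field; split; [apply pow_nonzero|]; lra.
Qed.

Lemma left_piece_is_derive (k : nat) (x : R) :
  (k < 3)%nat -> is_derive (left_piece r k) x (left_piece r (S k) x).
Proof.
  intros Hk.
  assert (Hopp : is_derive Ropp x (-1)) by (auto_derive; auto; ring).
  assert (H := is_derive_comp (right_piece r k) Ropp x _ _ (right_piece_is_derive k _ Hk) Hopp).
  replace (left_piece r (S k) x) with ((-1) ^ S k * scal (-1) (right_piece r (S k) (- x))).
  - apply (is_derive_scal (fun x => right_piece r k (- x))); exact H.
  - unfold left_piece, scal; simpl; unfold mult; simpl; ring.
Qed.

Lemma mid_piece_is_derive (k : nat) (x : R) : is_derive (mid_piece k) x (mid_piece (S k) x).
Proof. destruct k as [|[|k]]; unfold mid_piece; auto_derive; auto. Qed.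

Lemma right_piece_continuous (k : nat) (x : R) : continuous (right_piece r k) x.
Proof.
  apply (continuous_mult (fun _ => r / r ^ k) (fun x => profile_deriv k ((x - r) / r)));
    [apply continuous_const|].
  apply (continuous_comp (fun x => (x - r) / r)); [|apply profile_deriv_continuous].
  apply continuous_of_ex_derive; auto_derive; lra.
Qed.

Lemma left_piece_continuous (k : nat) (x : R) : continuous (left_piece r k) x.
Proof.
  apply (continuous_mult (fun _ => (-1) ^ S k) (fun x => right_piece r k (- x)));
    [apply continuous_const|].
  apply (continuous_comp Ropp); [|apply right_piece_continuous].
  apply continuous_of_ex_derive; auto_derive; auto.
Qed.

Lemma mid_piece_continuous (k : nat) (x : R) : continuous (mid_piece k) x.
Proof. apply continuous_of_ex_derive; eexists; apply mid_piece_is_derive. Qed.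

Lemma right_piece_outer (k : nat) : (k < 3)%nat -> right_piece r k (2 * r) = 0.
Proof.
  intros Hk. unfold right_piece. replace ((2 * r - r) / r) with 1 by (field; lra).
  destruct k as [|[|[|k]]]; [..|lia]; simpl; ring.
Qed.

Lemma right_piece_inner (k : nat) : (k < 3)%nat -> right_piece r k r = mid_piece k r.
Proof.
  intros Hk. unfold right_piece. replace ((r - r) / r) with 0 by (field; lra).
  destruct k as [|[|[|k]]]; [..|lia]; simpl; field; lra.
Qed.

Lemma left_piece_outer (k : nat) : (k < 3)%nat -> left_piece r k (- (2 * r)) = 0.
Proof. intros Hk. unfold left_piece. rewrite Ropp_involutive, right_piece_outer; auto; ring. Qed.

Lemma left_piece_inner (k : nat) : (k < 3)%nat -> left_piece r k (- r) = mid_piece k (- r).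
Proof.
  intros Hk. unfold left_piece. rewrite Ropp_involutive, right_piece_inner by auto.
  destruct k as [|[|[|k]]]; simpl; ring.
Qed.

Lemma right_piece_bound (k : nat) (x : R) :
  r <= x <= 2 * r -> Rabs (right_piece r k x) <= 1188 * (r / r ^ k).
Proof.
  intros Hx. assert (Hrk : 0 < r / r ^ k) by (apply Rdiv_lt_0_compat; [|apply pow_lt]; lra).
  unfold right_piece. rewrite Rabs_mult, (Rabs_pos_eq (r / r ^ k)), Rmult_comm by lra.
  apply Rmult_le_compat_r; [lra|]. apply profile_deriv_bound. split.
  - apply Rdiv_le_0_compat; lra.
  - apply Rmult_le_reg_r with r; [lra|]. unfold Rdiv; rewrite Rmult_assoc, Rinv_l; lra.
Qed.

Lemma left_piece_bound (k : nat) (x : R) :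
  - (2 * r) <= x <= - r -> Rabs (left_piece r k x) <= 1188 * (r / r ^ k).
Proof.
  intros Hx. unfold left_piece. rewrite Rabs_mult, pow_1_abs, Rmult_1_l.
  apply right_piece_bound; lra.
Qed.

Lemma mid_piece_bound (k : nat) (x : R) :
  - r <= x <= r -> Rabs (mid_piece k x) <= r / r ^ k.
Proof.
  intros Hx. assert (Hrk : 0 < r / r ^ k) by (apply Rdiv_lt_0_compat; [|apply pow_lt]; lra).
  destruct k as [|[|k]]; simpl in Hrk |- *.
  - replace (r / 1) with r by field. apply Rabs_le; lra.
  - replace (r / (r * 1)) with 1 by (field; lra). rewrite Rabs_R1; lra.
  - rewrite Rabs_R0; lra.
Qed.

Lemma trig_int_cos_step (k : nat) (w : R) :
  (k < 3)%nat -> w * trig_int r k cos w = - trig_int r (S k) sin w.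
Proof.
  intros Hk. unfold trig_int. rewrite !Rmult_plus_distr_l.
  rewrite (RInt_mul_cos_by_parts (left_piece r k) (left_piece r (S k))),
    (RInt_mul_cos_by_parts (mid_piece k) (mid_piece (S k))),
    (RInt_mul_cos_by_parts (right_piece r k) (right_piece r (S k)));
    auto using left_piece_is_derive, mid_piece_is_derive, right_piece_is_derive,
      left_piece_continuous, mid_piece_continuous, right_piece_continuous.
  rewrite left_piece_outer, left_piece_inner, right_piece_inner, right_piece_outer by auto.
  ring.
Qed.

Lemma trig_int_sin_step (k : nat) (w : R) :
  (k < 3)%nat -> w * trig_int r k sin w = trig_int r (S k) cos w.
Proof.
  intros Hk. unfold trig_int. rewrite !Rmult_plus_distr_l.
  rewrite (RInt_mul_sin_by_parts (left_piece r k) (left_piece r (S k))),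
    (RInt_mul_sin_by_parts (mid_piece k) (mid_piece (S k))),
    (RInt_mul_sin_by_parts (right_piece r k) (right_piece r (S k)));
    auto using left_piece_is_derive, mid_piece_is_derive, right_piece_is_derive,
      left_piece_continuous, mid_piece_continuous, right_piece_continuous.
  rewrite left_piece_outer, left_piece_inner, right_piece_inner, right_piece_outer by auto.
  ring.
Qed.

Lemma trig_norm_pow (k : nat) (w : R) :
  (k <= 3)%nat -> trig_norm r k w = Rabs w ^ k * trig_norm r 0 w.
Proof.
  induction k as [|k IH]; intros Hk; [simpl; ring|].
  simpl pow. rewrite Rmult_assoc, <- IH by lia. unfold trig_norm.
  rewrite <- (Rabs_Ropp (trig_int r (S k) sin w)), <- trig_int_cos_step, <- trig_int_sin_step
    by lia.
  rewrite !Rabs_mult; ring.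
Qed.

Lemma trig_int_bound (k : nat) (tr : R -> R) (w : R) :
  unit_kernel tr -> Rabs (trig_int r k tr w) <= 2378 * (r * (r / r ^ k)).
Proof.
  intros Htr. unfold trig_int.
  assert (HL := abs_RInt_mul_kernel_le (left_piece r k) tr w (- (2 * r)) (- r) _
    ltac:(lra) Htr (left_piece_continuous k) (left_piece_bound k)).
  assert (HM := abs_RInt_mul_kernel_le (mid_piece k) tr w (- r) r _
    ltac:(lra) Htr (mid_piece_continuous k) (mid_piece_bound k)).
  assert (HR := abs_RInt_mul_kernel_le (right_piece r k) tr w r (2 * r) _
    ltac:(lra) Htr (right_piece_continuous k) (right_piece_bound k)).
  eapply Rle_trans; [apply Rabs_triang|].
  eapply Rle_trans; [apply Rplus_le_compat_r, Rabs_triang|].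
  lra.
Qed.

Lemma trig_norm_bound (k : nat) (w : R) : trig_norm r k w <= 4756 * (r * (r / r ^ k)).
Proof.
  unfold trig_norm.
  generalize (trig_int_bound k cos w unit_kernel_cos) (trig_int_bound k sin w unit_kernel_sin).
  lra.
Qed.

Lemma continuous_trig_int (k : nat) (tr : R -> R) (w : R) :
  unit_kernel tr -> continuous (trig_int r k tr) w.
Proof.
  intros Htr. unfold trig_int.
  apply continuous_Rplus; [apply continuous_Rplus|]; apply continuous_RInt_mul_kernel;
    auto using left_piece_continuous, mid_piece_continuous, right_piece_continuous; lra.
Qed.

Lemma cmod_bump_fourier_le (w : R) : cmod (bump_re r w) (bump_im r w) <= trig_norm r 0 w.
Proof.
  assert (HPI : 1 <= 2 * PI) by (generalize PI_RGT_0 PI2_3_2; lra).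
  eapply Rle_trans; [apply cmod_le_abs_sum|].
  unfold bump_re, bump_im, trig_norm, Rdiv.
  rewrite !Rabs_mult, Rabs_Ropp, Rabs_inv, (Rabs_pos_eq (2 * PI)) by lra.
  assert (0 < / (2 * PI) <= 1).
  { split; [apply Rinv_0_lt_compat; lra|]. rewrite <- Rinv_1. apply Rinv_le_contravar; lra. }
  generalize (Rabs_pos (trig_int r 0 cos w)) (Rabs_pos (trig_int r 0 sin w)); nra.
Qed.

Lemma bump_fourier_weighted_bounds (w : R) :
  cmod (bump_re r w) (bump_im r w) * (1 + (r * w) ^ 2) <= 2 * 4756 * (r * r) /\
  Rabs w * cmod (bump_re r w) (bump_im r w) * (1 + (r * w) ^ 2) <= 2 * 4756 * r.
Proof.
  rewrite <- (pow2_abs (r * w)), Rabs_mult, (Rabs_pos_eq r) by lra.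
  assert (Hcmod := cmod_bump_fourier_le w).
  assert (Hdecay : forall k, (k <= 3)%nat ->
    Rabs w ^ k * cmod (bump_re r w) (bump_im r w) <= 4756 * (r * (r / r ^ k))).
  { intros k Hk. rewrite <- trig_norm_bound, (trig_norm_pow k w Hk).
    apply Rmult_le_compat_l; [apply pow_le, Rabs_pos | exact Hcmod]. }
  apply lorentz_weighted_bounds; [exact r_pos | ..].
  - unfold cmod; apply sqrt_pos.
  - generalize (Hdecay 0%nat (le_0_n _)); simpl. replace (r / 1) with r by field. lra.
  - generalize (Hdecay 2%nat ltac:(lia)); simpl. replace (r * (r / (r * (r * 1)))) with 1 by (field; lra). lra.
  - generalize (Hdecay 3%nat ltac:(lia)); simpl.
    replace (r * (r / (r * (r * (r * 1))))) with (/ r) by (field; lra). unfold Rdiv; lra.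
Qed.

Lemma bump_outside (x : R) : x < - (2 * r) \/ 2 * r < x -> bump r x = 0.
Proof. intros Hx; unfold bump; repeat (destruct Rlt_dec || destruct Rle_dec); lra. Qed.

Lemma bump_left (x : R) : - (2 * r) < x < - r -> bump r x = left_piece r 0 x.
Proof. intros Hx; unfold bump; repeat (destruct Rlt_dec || destruct Rle_dec); lra. Qed.

Lemma bump_mid (x : R) : - r <= x <= r -> bump r x = x.
Proof. intros Hx; unfold bump; repeat (destruct Rlt_dec || destruct Rle_dec); lra. Qed.

Lemma bump_right (x : R) : r < x < 2 * r -> bump r x = right_piece r 0 x.
Proof. intros Hx; unfold bump; repeat (destruct Rlt_dec || destruct Rle_dec); lra. Qed.

Lemma improper_int_bump_comp (F : R -> R -> R) :
  (forall x, F x 0 = 0) ->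
  (forall p : R -> R, (forall x, continuous p x) -> forall x, continuous (fun y => F y (p y)) x) ->
  improper_int (fun x => F x (bump r x))
    (RInt (fun x => F x (left_piece r 0 x)) (- (2 * r)) (- r)
     + RInt (fun x => F x (mid_piece 0 x)) (- r) r
     + RInt (fun x => F x (right_piece r 0 x)) r (2 * r)).
Proof.
  intros HF0 HFc.
  apply (improper_int_of_wide _ (- (2 * r)) (2 * r)); intros a' b' Ha' Hb'.
  apply is_RInt_three_pieces; try lra.
  - intros x Hx; rewrite bump_outside; auto.
  - intros x Hx; rewrite bump_left; auto.
  - intros x Hx; rewrite bump_mid; [reflexivity | lra].
  - intros x Hx; rewrite bump_right; auto.
  - apply HFc, left_piece_continuous.
  - apply HFc, mid_piece_continuous.
  - apply HFc, right_piece_continuous.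
Qed.

Lemma bump_abs_integrable : abs_integrable (bump r).
Proof.
  split.
  - apply (improper_int_bump_comp (fun _ v => v)); auto.
  - eexists. apply (improper_int_bump_comp (fun _ v => Rabs v)); [intros; apply Rabs_R0|].
    intros p Hp x. apply (continuous_Rabs_comp p), Hp.
Qed.

Lemma improper_int_bump_kernel (tr : R -> R) (c w : R) :
  unit_kernel tr -> improper_int (fun x => bump r x * tr (w * x) * c) (trig_int r 0 tr w * c).
Proof.
  intros Htr.
  assert (Hex : forall (p : R -> R) a b, (forall x, continuous p x) ->
    ex_RInt (fun x => p x * tr (w * x)) a b).
  { intros p a b Hp. apply ex_RInt_of_continuous; intros; apply continuous_mul_kernel; auto. }
  unfold trig_int. rewrite !Rmult_plus_distr_r, <- !RInt_mult_r
    by auto using left_piece_continuous, mid_piece_continuous, right_piece_continuous.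
  apply (improper_int_bump_comp (fun x v => v * tr (w * x) * c)); [intros; ring|].
  intros p Hp x.
  apply (continuous_mult (fun y => p y * tr (w * y)) (fun _ => c));
    [apply continuous_mul_kernel; auto | apply continuous_const].
Qed.

Lemma bump_is_fourier : is_fourier (bump r) (bump_re r) (bump_im r).
Proof.
  intros w. split.
  - exact (improper_int_bump_kernel cos (/ (2 * PI)) w unit_kernel_cos).
  - apply (improper_int_ext (fun x => bump r x * sin (w * x) * - / (2 * PI)));
      [intros; unfold Rdiv; ring|].
    replace (bump_im r w) with (trig_int r 0 sin w * - / (2 * PI))
      by (unfold bump_im, Rdiv; ring).
    apply improper_int_bump_kernel, unit_kernel_sin.
Qed.

Lemma continuous_cmod_bump_fourier (w : R) :
  continuous (fun v => cmod (bump_re r v) (bump_im r v)) w.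
Proof.
  apply continuous_cmod; unfold bump_re, bump_im, Rdiv.
  - apply (continuous_mult (trig_int r 0 cos) (fun _ => / (2 * PI)));
      auto using continuous_trig_int, unit_kernel_cos, continuous_const.
  - apply (continuous_mult (fun v => - trig_int r 0 sin v) (fun _ => / (2 * PI)));
      [|apply continuous_const].
    apply (continuous_opp (trig_int r 0 sin)), continuous_trig_int, unit_kernel_sin.
Qed.

Lemma bump_fourier_l1_bound :
  exists I, improper_int (fun w => cmod (bump_re r w) (bump_im r w)) I /\
            I <= 2 * 4756 * PI * r.
Proof.
  destruct (improper_int_of_lorentzian_bound (fun w => cmod (bump_re r w) (bump_im r w))
              r (2 * 4756 * (r * r))) as [I [HI HIle]]; auto.
  - apply continuous_cmod_bump_fourier.
  - intros w; unfold cmod; apply sqrt_pos.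
  - intros w; apply bump_fourier_weighted_bounds.
  - exists I; split; [exact HI|]. replace (2 * 4756 * PI * r) with (2 * 4756 * (r * r) * (PI / r))
      by (field; lra). exact HIle.
Qed.

Lemma bump_fourier_moment_bound :
  exists I, improper_int (fun w => Rabs w * cmod (bump_re r w) (bump_im r w)) I /\
            I <= 2 * 4756 * PI.
Proof.
  destruct (improper_int_of_lorentzian_bound
              (fun w => Rabs w * cmod (bump_re r w) (bump_im r w)) r (2 * 4756 * r))
    as [I [HI HIle]]; auto.
  - intros w. apply (continuous_mult Rabs (fun v => cmod (bump_re r v) (bump_im r v)));
      auto using continuous_Rabs, continuous_cmod_bump_fourier.
  - intros w; apply Rmult_le_pos; [apply Rabs_pos | unfold cmod; apply sqrt_pos].
  - intros w; apply bump_fourier_weighted_bounds.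
  - exists I; split; [exact HI|]. replace (2 * 4756 * PI) with (2 * 4756 * r * (PI / r))
      by (field; lra). exact HIle.
Qed.

End Bump.

Theorem propositionF5 :
  exists A : R, 0 < A /\
  forall r : R, 1 <= r ->
  exists h hr hi : R -> R,
    (forall x : R, -r <= x <= r -> h x = x) /\
    abs_integrable h /\
    is_fourier h hr hi /\
    (exists I1 : R, improper_int (fun w => cmod (hr w) (hi w)) I1 /\
                    I1 <= A * Rpower r (3 / 2)) /\
    (exists I2 : R, improper_int (fun w => Rabs w * cmod (hr w) (hi w)) I2 /\
                    I2 <= A * Rpower r (1 / 2)).
Proof.
  assert (HPI := PI_RGT_0).
  exists (2 * 4756 * PI). split; [lra|].
  intros r Hr1. assert (Hr : 0 < r) by lra.
  assert (Hr32 : r <= Rpower r (3 / 2))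
    by (rewrite <- (Rpower_1 r) at 1 by lra; apply Rle_Rpower; lra).
  assert (Hr12 : 1 <= Rpower r (1 / 2))
    by (rewrite <- (Rpower_O r) at 1 by lra; apply Rle_Rpower; lra).
  exists (bump r), (bump_re r), (bump_im r).
  split; [intros; apply bump_mid; lra|].
  split; [apply bump_abs_integrable; lra|].
  split; [apply bump_is_fourier; lra|].
  split.
  - destruct (bump_fourier_l1_bound r Hr) as [I [HI HIle]].
    exists I; split; [exact HI|].
    eapply Rle_trans; [exact HIle | apply Rmult_le_compat_l; lra].
  - destruct (bump_fourier_moment_bound r Hr) as [I [HI HIle]].
    exists I; split; [exact HI|].
    rewrite <- (Rmult_1_r (2 * 4756 * PI)) in HIle.
    eapply Rle_trans; [exact HIle | apply Rmult_le_compat_l; lra].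
Qed.
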